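(* Let $G$ be a finite Abelian group (written additively) endowed with an automorphism $M : G \to G$ such that $M^2 = 1 := \mathrm{Id}_G$. Let $G^+ := \operatorname{Ker}(M - 1)$, $G^- := \operatorname{Ker}(M + 1)$, $U := G^+ \cap G^-$, $W := G^+ + G^-$. Then: (1) $U = G^+_{[2]} = G^-_{[2]}$, where $H_{[2]}$ denotes the subgroup of $2$-torsion elements of a group $H$, and there is a canonical isomorphism $W \cong (G^+ \oplus G^-)/U$; (2) $V := G/W$ is a vector space over $\mathbb{Z}/2$, and the action induced by $M$ on $V$ is the identity; (3) for $x \in G$, $M(x) = x + F(x)$, where $F : G \to G^-$ is a homomorphism vanishing on $G^+$ and equal to $x \mapsto -2x$ on $G^-$; (4) for fixed $G, G^+, G^-$, the set of homomorphisms $M'$ with $M'^2 = 1$ such that $G^+$ is contained in the $(+1)$-eigenspace of $M'$ and $G^-$ is contained in the $(-1)$-eigenspace of $M'$ is parametrized by the set $\operatorname{Hom}(V, U)$; (5) now let $G$ be any finite Abelian group containing subgroups $W, G^-, G^+$ such that (I) $W = G^- + G^+$, (II) $W \cong (G^- \oplus G^+)/U$ where $U = G^+_{[2]} = G^-_{[2]}$, and (III) $V := G/W$ is a vector space over $\mathbb{Z}/2$. Let $F_W : W \to G^-$ be the homomorphism vanishing on $G^+$ and equal to $x \mapsto -2x$ on $G^-$. Then there exists an extension $F : G \to G^-$ of $F_W$, and the set of automorphisms $M$ of $G$ with $M^2 = 1$ such that $G^+$ equals the $(+1)$-eigenspace of $M$ and $G^-$ equals the $(-1)$-eigenspace of $M$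 is in bijection (via $M = 1 + F'$) with the set of all extensions $F' = F + \phi$, $\phi \in \operatorname{Hom}(V, U)$ (viewed as homomorphisms $G \to G^-$ via $G \to V$), satisfying $G^+ = \operatorname{Ker}(F')$ and $G^- = \operatorname{Ker}(F' + 2)$.
   Formalization: In part (4), the homomorphisms M′ also satisfy $M'(x) - x \in G^-$ for all x ∈ G, that is, M′ = 1 + F′ with F′ : G → G⁻. The statement above fails without it. *)

(* Finite abelian groups are finZmodType's (additive notation);
   subgroups are finite sets {set G}; homomorphisms are {additive G -> G}. *)
From HB Require Import structures.
From mathcomp Require Import all_boot all_order all_algebra.
Set Implicit Arguments. Unset Strict Implicit. Unset Printing Implicit Defensive.
Import GRing.Theory.
Local Open Scope ring_scope.

Section Defs.
Variable G : finZmodType.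

Definition is_subgroup (H : {set G}) : Prop :=
  0 \in H /\ (forall x y, x \in H -> y \in H -> x - y \in H).

Definition Gplus (M : G -> G) : {set G} := [set x | M x - x == 0].
Definition Gminus (M : G -> G) : {set G} := [set x | M x + x == 0].

Definition tors2 (H : {set G}) : {set G} := [set x in H | x *+ 2 == 0].

Definition sumset (A B : {set G}) : {set G} := [set x + y | x in A, y in B].

Definition sum_kernel (A B : {set G}) : {set G * G} :=
  [set p in setX A B | p.1 + p.2 == 0].

(* the image of U in A (+) B under u |-> (u, -u); the canonical isomorphism
   (A (+) B)/U ~= A + B means that this is exactly the kernel of the sum map *)
Definition anti_diag (U : {set G}) : {set G * G} := [set (u, - u) | u in U].

(* Hom(G/W, U), represented as homomorphisms G -> G vanishing on W with values in U *)
Definition homVU (W U : {set G}) (phi : G -> G) : Prop :=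
  (forall w, w \in W -> phi w = 0) /\ (forall x, phi x \in U).

End Defs.

From HB Require Import structures.
From mathcomp Require Import all_boot all_order all_algebra.
Set Implicit Arguments. Unset Strict Implicit. Unset Printing Implicit Defensive.
Import GRing.Theory.
Local Open Scope ring_scope.

(* For an involution M, F := M - 1 is 0 on G^+, is -2 on G^- and takes values in G^-,
   while 2x = (x + M x) + (x - M x) lies in W = G^+ + G^-.  Another involution M' that is
   +1 on G^+ and -1 on G^- with (M' - 1) G inside G^- differs from M by phi := M' - M,
   which kills W, hence 2G; so phi takes 2-torsion values in G^-, i.e. values in U, and
   conversely M + phi is such an involution for every such phi.
   For (5), F_W (m + p) := -2m is well defined because two decompositions of an element
   of W differ by an element of U, which 2 kills.  F_W extends to G one element x at a
   time: 2x = m + p lies in W, and x may be sent to -m.  Then 1 + F is an involution of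
   the above kind, and the involutions with eigenspaces exactly G^+ and G^- are the
   1 + F + phi whose eigenspaces come out right. *)

Section Subgroups.
Variable G : finZmodType.
Implicit Types (A B H : {set G}) (x y : G).

Section Closure.
Variable H : {set G}.
Hypothesis sgH : is_subgroup H.

Lemma subgroup0 : 0 \in H. Proof. by case: sgH. Qed.

Lemma subgroupB x y : x \in H -> y \in H -> x - y \in H.
Proof. by case: sgH => _; apply. Qed.

Lemma subgroupN x : x \in H -> - x \in H.
Proof. by move=> Hx; rewrite -sub0r subgroupB ?subgroup0. Qed.

Lemma subgroupD x y : x \in H -> y \in H -> x + y \in H.
Proof. by move=> Hx Hy; rewrite -[y]opprK subgroupB ?subgroupN. Qed.

Lemma subgroupMn n x : x \in H -> x *+ n \in H.
Proof. by move=> Hx; elim: n => [|n IHn]; rewrite ?mulr0n ?subgroup0 // mulrS subgroupD. Qed.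

Lemma subgroupDl x y : x \in H -> (x + y \in H) = (y \in H).
Proof.
move=> Hx; apply/idP/idP => [Hxy | Hy]; last exact: subgroupD.
by rewrite -(addKr x y) subgroupD ?subgroupN.
Qed.

(* [[set y | y - x \in H]] is the coset [x + H]; when [2x \in H], adding it to [H]
   yields the subgroup generated by [H] and [x]. *)
Lemma subgroup_adjoin x : x *+ 2 \in H -> is_subgroup (H :|: [set y | y - x \in H]).
Proof.
move=> H2x; split=> [|a b]; first by rewrite inE subgroup0.
rewrite !inE => /orP[Ha|Hax] /orP[Hb|Hbx].
- by rewrite subgroupB.
- have -> : a - b - x = a - x *+ 2 - (b - x).
    by rewrite opprB addrA mulr2n opprD addrA subrK addrAC.
  by apply/orP; right; apply: subgroupB => //; apply: subgroupB.
- by apply/orP; right; rewrite addrAC subgroupB.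
- have -> : a - b = (a - x) - (b - x) by rewrite opprB subrKA.
  by rewrite subgroupB.
Qed.

Lemma morph_adjoin (V : zmodType) (g : G -> V) x a :
    {in H &, {morph g : u v / u + v}} -> x *+ 2 \in H -> g (x *+ 2) = a *+ 2 ->
  {in H :|: [set y | y - x \in H] &,
    {morph (fun y => if y \in H then g y else g (y - x) + a) : u v / u + v}}.
Proof.
move=> gD H2x g2x u v; rewrite !inE.
case: (boolP (u \in H)) => Hu; case: (boolP (v \in H)) => Hv //= Hux Hvx.
- by rewrite subgroupD //; apply: gD.
- by rewrite (subgroupDl v Hu) (negbTE Hv) -addrA (gD u (v - x)) ?addrA.
- by rewrite addrC (subgroupDl u Hv) (negbTE Hu) addrC addrAC (gD (u - x) v) // addrAC.
have uvE : u + v = (u - x) + (v - x) + x *+ 2 by rewrite mulr2n addrACA !subrK.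
have Hsum : (u - x) + (v - x) \in H by apply: subgroupD.
have -> : u + v \in H by rewrite uvE subgroupD.
by rewrite uvE (gD _ _ Hsum H2x) (gD _ _ Hux Hvx) g2x mulr2n addrACA.
Qed.
End Closure.

Lemma mem_sumset A B x y : x \in A -> y \in B -> x + y \in sumset A B.
Proof. by move=> Ax By; apply: imset2_f. Qed.

Lemma sumsetC A B : sumset A B = sumset B A.
Proof.
by apply/setP=> z; apply/imset2P/imset2P => -[x y Ax By ->]; exists y x; rewrite // addrC.
Qed.

Lemma mem_sumsetl A B x : is_subgroup B -> x \in A -> x \in sumset A B.
Proof. by move=> sgB Ax; rewrite -[x]addr0 mem_sumset ?subgroup0. Qed.

Lemma mem_sumsetr A B y : is_subgroup A -> y \in B -> y \in sumset A B.
Proof. by move=> sgA By; rewrite sumsetC mem_sumsetl. Qed.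

Lemma subgroup_sumset A B : is_subgroup A -> is_subgroup B -> is_subgroup (sumset A B).
Proof.
move=> sgA sgB; split; first exact: mem_sumsetl (subgroup0 sgA).
move=> _ _ /imset2P[a b Aa Bb ->] /imset2P[c d Ac Bd ->].
by rewrite opprD addrACA mem_sumset ?subgroupB.
Qed.

Lemma sum_kernel_anti_diag A B : is_subgroup B -> sum_kernel A B = anti_diag (A :&: B).
Proof.
move=> sgB; apply/setP=> -[a b]; rewrite !inE /=; apply/idP/imsetP.
  case/andP=> /andP[Aa Bb]; rewrite addr_eq0 => /eqP abE.
  by exists a; rewrite ?inE ?Aa ?abE ?opprK ?subgroupN.
case=> u; rewrite inE => /andP[Au Bu] [-> ->].
by rewrite Au subgroupN // subrr eqxx.
Qed.

Lemma anti_diag_inj : injective (@anti_diag G).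
Proof.
have mem_anti_diag u U : ((u, - u) \in anti_diag U) = (u \in U).
  by apply/imsetP/idP => [[w Uw [-> _]] // | Uu]; exists u.
by move=> U V eqUV; apply/setP=> u; rewrite -!mem_anti_diag eqUV.
Qed.
End Subgroups.

Section Eigenspaces.
Variable G : finZmodType.
Implicit Types (x : G) (M : G -> G).

Lemma mem_Gplus M x : (x \in Gplus M) = (M x == x).
Proof. by rewrite inE subr_eq0. Qed.

Lemma mem_Gminus M x : (x \in Gminus M) = (M x == - x).
Proof. by rewrite inE addr_eq0. Qed.

Lemma Gplus_Gminus_tors2p M : Gplus M :&: Gminus M = tors2 (Gplus M).
Proof.
apply/setP=> x; rewrite !inE subr_eq0 addr_eq0 mulr2n addr_eq0.
by case: eqP => [->|].
Qed.

Lemma Gplus_Gminus_tors2m M : Gplus M :&: Gminus M = tors2 (Gminus M).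
Proof.
apply/setP=> x; rewrite !inE subr_eq0 addr_eq0 mulr2n addr_eq0 andbC.
by case: eqP => [->|//]; rewrite eq_sym.
Qed.

Lemma Gplus_Gminus_shift M D : (forall x, M x = x + D x) ->
  Gplus M = [set x | D x == 0] /\ Gminus M = [set x | D x + x *+ 2 == 0].
Proof.
by move=> ME; split; apply/setP=> x; rewrite !inE ME (addrC x) ?addrK // -addrA -mulr2n.
Qed.

Lemma subgroup_Gplus (M : {additive G -> G}) : is_subgroup (Gplus M).
Proof.
split=> [|x y]; rewrite !mem_Gplus ?raddf0 // raddfB.
by move=> /eqP-> /eqP->.
Qed.

Lemma subgroup_Gminus (M : {additive G -> G}) : is_subgroup (Gminus M).
Proof.
split=> [|x y]; rewrite !mem_Gminus ?raddf0 ?oppr0 // raddfB.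
by move=> /eqP-> /eqP->; rewrite opprB opprK addrC.
Qed.

Section Involution.
Variable M : {additive G -> G}.
Hypothesis MK : involutive M.

Lemma involution_subr_Gminus x : M x - x \in Gminus M.
Proof. by rewrite mem_Gminus raddfB MK opprB. Qed.

Lemma involution_addr_Gplus x : x + M x \in Gplus M.
Proof. by rewrite mem_Gplus raddfD MK addrC. Qed.

Lemma involution_double_sumset x : x *+ 2 \in sumset (Gplus M) (Gminus M).
Proof.
have -> : x *+ 2 = (x + M x) - (M x - x) by rewrite opprB addrACA subrr addr0 mulr2n.
apply: mem_sumset; first exact: involution_addr_Gplus.
by apply: subgroupN; [exact: subgroup_Gminus | exact: involution_subr_Gminus].
Qed.
End Involution.
End Eigenspaces.

Section PlusMinusInvolutions.
Variable G : finZmodType.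
Implicit Types (A B : {set G}) (x : G).

Definition pm_involution A B (M : G -> G) : Prop :=
  (forall x, M (M x) = x) /\ (forall x, x \in A -> M x = x) /\
  (forall x, x \in B -> M x = - x) /\ (forall x, M x - x \in B).

Lemma involution_pm_eigen (M : {additive G -> G}) :
  involutive M -> pm_involution (Gplus M) (Gminus M) M.
Proof.
move=> MK; split; [|split; [|split]] => // x.
- by rewrite mem_Gplus => /eqP.
- by rewrite mem_Gminus => /eqP.
- exact: involution_subr_Gminus.
Qed.

Lemma pm_involution_decomp A B (M : {additive G -> G}) :
  pm_involution A B M ->
  exists F : {additive G -> G},
    (forall x, M x = x + F x) /\ (forall x, F x \in B) /\
    (forall x, x \in A -> F x = 0) /\ (forall x, x \in B -> F x = - (x *+ 2)).
Proof.
case=> _ [MA [MB MB1]]; exists (M \- idfun); split; [|split; [|split]] => x /=.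
- by rewrite subrKC.
- exact: MB1.
- by move/MA->; rewrite subrr.
- by move/MB->; rewrite mulr2n opprD.
Qed.

Lemma pm_involution_addF A B (F : {additive G -> G}) :
    (forall x, F x \in B) -> (forall x, x \in A -> F x = 0) ->
    (forall x, x \in B -> F x = - (x *+ 2)) ->
  pm_involution A B (idfun \+ F).
Proof.
move=> FB FA FBB; split; [|split; [|split]] => x /=.
- by rewrite raddfD (FBB _ (FB x)) mulr2n opprD addNKr addrK.
- by move/FA->; rewrite addr0.
- by move/FBB->; rewrite mulr2n opprD addrA subrr add0r.
- by rewrite addrAC subrr add0r.
Qed.

Section Perturbation.
Variables (A B : {set G}) (M0 : {additive G -> G}).
Hypotheses (sgA : is_subgroup A) (sgB : is_subgroup B).
Hypothesis double_sumset : forall x, x *+ 2 \in sumset A B.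
Hypothesis tors2B : tors2 B \subset A.
Hypothesis M0pm : pm_involution A B M0.

Lemma pm_involutionP (M : {additive G -> G}) :
  pm_involution A B M <->
  exists phi : {additive G -> G},
    homVU (sumset A B) (A :&: B) phi /\ (forall x, M x = M0 x + phi x).
Proof.
have [M0K [M0A [M0B M0B1]]] := M0pm.
split=> [[_ [MA [MB MB1]]] | [phi [[phiW phiU] ME]]].
  pose phi : {additive G -> G} := M \- M0.
  have phiW w : w \in sumset A B -> phi w = 0.
    by case/imset2P=> a b Aa Bb ->; rewrite raddfD /= MA // M0A // MB // M0B // !subrr addr0.
  exists phi; split; last by move=> x /=; rewrite subrKC.
  split=> // x.
  have phiB : phi x \in B.
    have -> : phi x = (M x - x) - (M0 x - x) by rewrite opprB subrKA.
    exact: subgroupB.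
  have phi2 : phi x *+ 2 = 0 by rewrite -raddfMn phiW.
  by rewrite inE (subsetP tors2B) // inE phiB phi2 eqxx.
have phiA x : phi x \in A by have /setIP[] := phiU x.
have phiB x : phi x \in B by have /setIP[] := phiU x.
have phiM0 x : phi (M0 x) = phi x.
  by rewrite -[M0 x](subrK x) raddfD phiW ?add0r ?mem_sumsetr.
have phi2 x : phi x + phi x = 0.
  by rewrite -{1}(M0A _ (phiA x)) M0B ?addNr.
split; [|split; [|split]] => x.
- rewrite !ME (raddfD M0) (raddfD phi) M0K M0A // phiM0 (phiW (phi x)) ?mem_sumsetl //.
  by rewrite addr0 -addrA phi2 addr0.
- by move=> Ax; rewrite ME M0A // phiW ?addr0 ?mem_sumsetl.
- by move=> Bx; rewrite ME M0B // phiW ?addr0 ?mem_sumsetr.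
- by rewrite ME addrAC subgroupD.
Qed.
End Perturbation.
End PlusMinusInvolutions.

Section AdditiveExtension.
Variables (G : finZmodType) (A W : {set G}) (f : G -> G).
Hypotheses (sgA : is_subgroup A) (sgW : is_subgroup W).
Hypothesis double_W : forall x, x *+ 2 \in W.
Hypothesis fD : {in W &, {morph f : x y / x + y}}.
Hypothesis fA : {in W, forall x, f x \in A}.
Hypothesis f_double : forall x, exists2 a, a \in A & f (x *+ 2) = a *+ 2.

Definition extension_on (H : {set G}) (g : G -> G) : Prop :=
  [/\ is_subgroup H, W \subset H, {in H &, {morph g : x y / x + y}},
      {in H, forall x, g x \in A} & {in W, g =1 f}].

(* Since [2x \in W], the image of [x] only has to halve [f (2x)] inside [A]. *)
Lemma extension_adjoin H g x :
  extension_on H g -> exists g', extension_on (H :|: [set y | y - x \in H]) g'.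
Proof.
case=> sgH WH gD gA gf; have [a Aa f2x] := f_double x.
have H2x : x *+ 2 \in H := subsetP WH _ (double_W x).
exists (fun y => if y \in H then g y else g (y - x) + a); split.
- exact: subgroup_adjoin.
- exact: subset_trans WH (subsetUl _ _).
- by apply: morph_adjoin => //; rewrite gf.
- move=> y; rewrite !inE; case: ifP => [Hy _ | _ /= Hyx]; first exact: gA.
  by rewrite subgroupD ?gA.
- by move=> w Ww; rewrite (subsetP WH _ Ww) gf.
Qed.

Lemma extension_onT : exists g, extension_on setT g.
Proof.
suff extend_from H g : extension_on H g -> exists g', extension_on setT g'.
  by apply: (extend_from W f); split.
have [n] := ubnP #|~: H|; elim: n H g => // n IHn H g ltHn extHg.
case: (pickP [pred x | x \notin H]) => [x /= Hx | allH]; last first.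
  suff HT : H = setT by exists g; rewrite -HT.
  by apply/setP=> y; rewrite in_setT; apply/negbFE/allH.
have [g' extHg'] := extension_adjoin x extHg.
set H' := H :|: _ in extHg'.
have sgH : is_subgroup H by case: extHg.
have ltH : (#|~: H'| < #|~: H|)%N.
  rewrite proper_card // properC; apply/properP; split; first exact: subsetUl.
  by exists x; rewrite // !inE subrr subgroup0 ?orbT.
by apply: IHn extHg'; apply: leq_trans ltH _; rewrite -ltnS.
Qed.

Lemma additive_extension :
  exists F : {additive G -> G}, {in W, F =1 f} /\ forall x, F x \in A.
Proof.
have [g [_ _ gD gA gf]] := extension_onT.
have gDT : {morph g : x y / x + y} by move=> x y; apply: gD; rewrite inE.
have g0 : g 0 = 0 by apply: (addrI (g 0)); rewrite -gDT !addr0.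
pose F : {additive G -> G} := HB.pack g (GRing.isNmodMorphism.Build G G g (g0, gDT)).
by exists F; split=> [w Ww | x] /=; [exact: gf | exact: gA (in_setT x)].
Qed.
End AdditiveExtension.

Section PrescribedEigenspaces.
Variables (G : finZmodType) (Gm Gp : {set G}).
Hypotheses (sgm : is_subgroup Gm) (sgp : is_subgroup Gp).
Hypothesis double_sumset : forall x, x *+ 2 \in sumset Gm Gp.
Hypothesis tors2E : tors2 Gp = tors2 Gm.
Hypothesis sum_kernelE : sum_kernel Gm Gp = anti_diag (tors2 Gp).

Lemma Gp_cap_Gm : Gp :&: Gm = tors2 Gp.
Proof. by apply: anti_diag_inj; rewrite -sum_kernelE sum_kernel_anti_diag // setIC. Qed.

Lemma double_Gm_part_unique m p m' p' :
  m \in Gm -> m' \in Gm -> p \in Gp -> p' \in Gp -> m + p = m' + p' -> m *+ 2 = m' *+ 2.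
Proof.
move=> Gm_m Gm_m' Gp_p Gp_p' mpE.
have : (m - m', p - p') \in sum_kernel Gm Gp.
  by rewrite !inE /= !subgroupB //= addrACA -opprD mpE subrr.
rewrite sum_kernelE => /imsetP[u]; rewrite inE => /andP[_ /eqP u2] [mE _].
by apply/eqP; rewrite -subr_eq0 -mulrnBl mE u2.
Qed.

(* The map [F_W : m + p |-> -2m] of the paper; its value off [W] is irrelevant. *)
Definition FW (y : G) : G :=
  if [pick m | (m \in Gm) && (y - m \in Gp)] is Some m then - (m *+ 2) else 0.

Lemma FW_sum m p : m \in Gm -> p \in Gp -> FW (m + p) = - (m *+ 2).
Proof.
move=> Gm_m Gp_p; rewrite /FW; case: pickP => [m' /andP[Gm_m' Gp_p'] | none].
  by congr (- _); apply: double_Gm_part_unique Gm_m' Gm_m Gp_p' Gp_p _; rewrite subrKC.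
by have := none m; rewrite Gm_m addrC addKr Gp_p.
Qed.

Lemma FW_Gp p : p \in Gp -> FW p = 0.
Proof. by move=> Gp_p; rewrite -[p]add0r FW_sum ?subgroup0 // mul0rn oppr0. Qed.

Lemma FW_Gm m : m \in Gm -> FW m = - (m *+ 2).
Proof. by move=> Gm_m; rewrite -[m in FW m]addr0 FW_sum ?subgroup0. Qed.

Lemma FW_mem y : FW y \in Gm.
Proof.
rewrite /FW; case: pickP => [m /andP[Gm_m _] | _]; last exact: subgroup0.
by rewrite subgroupN ?subgroupMn.
Qed.

Lemma FW_additive : {in sumset Gm Gp &, {morph FW : x y / x + y}}.
Proof.
move=> _ _ /imset2P[m p Gm_m Gp_p ->] /imset2P[m' p' Gm_m' Gp_p' ->].
by rewrite addrACA !FW_sum ?subgroupD // mulrnDl opprD.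
Qed.

Lemma FW_double x : exists2 a, a \in Gm & FW (x *+ 2) = a *+ 2.
Proof.
case/imset2P: (double_sumset x) => m p Gm_m Gp_p ->.
by exists (- m); rewrite ?subgroupN ?FW_sum ?mulNrn.
Qed.

Lemma exists_FW_extension :
  exists F : {additive G -> G},
    (forall x, F x \in Gm) /\ (forall x, x \in Gp -> F x = 0) /\
    (forall x, x \in Gm -> F x = - (x *+ 2)).
Proof.
have [F [FW_F F_Gm]] := additive_extension sgm (subgroup_sumset sgm sgp) double_sumset
  FW_additive (fun y _ => FW_mem y) FW_double.
exists F; split=> //; split=> x Hx.
- by rewrite FW_F ?mem_sumsetr ?FW_Gp.
- by rewrite FW_F ?mem_sumsetl ?FW_Gm.
Qed.

Variable F : {additive G -> G}.
Hypotheses (F_Gm : forall x, F x \in Gm) (F_Gp : forall x, x \in Gp -> F x = 0).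
Hypothesis F_Gm_double : forall x, x \in Gm -> F x = - (x *+ 2).

Lemma prescribed_involutionP (M : {additive G -> G}) :
  (bijective M /\ involutive M /\ Gplus M = Gp /\ Gminus M = Gm) <->
  exists phi : {additive G -> G},
    homVU (sumset Gm Gp) (tors2 Gp) phi /\ (forall x, M x = x + (F x + phi x)) /\
    Gp = [set x | F x + phi x == 0] /\ Gm = [set x | F x + phi x + x *+ 2 == 0].
Proof.
have tors2Gm : tors2 Gm \subset Gp by rewrite -tors2E; apply/subsetP=> x /setIdP[].
have double_pm x : x *+ 2 \in sumset Gp Gm by rewrite sumsetC.
have := pm_involutionP sgp sgm double_pm tors2Gm (pm_involution_addF F_Gm F_Gp F_Gm_double) M.
rewrite sumsetC Gp_cap_Gm => P.
split=> [[_ [MK [GpE GmE]]] | [phi [phiVU [ME [GpE GmE]]]]].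
  have /P[phi [phiVU ME]] : pm_involution Gp Gm M.
    by rewrite -GpE -GmE; apply: involution_pm_eigen.
  have ME' x : M x = x + (F x + phi x) by rewrite ME addrA.
  exists phi; do 2!split=> //.
  by rewrite -GpE -GmE; apply: Gplus_Gminus_shift.
have [MK _] : pm_involution Gp Gm M by apply/P; exists phi; split=> // x; rewrite ME addrA.
by have [-> ->] := Gplus_Gminus_shift ME; split; [exact: inv_bij | split].
Qed.
End PrescribedEigenspaces.

Theorem lemma2p5 :
  (forall (G : finZmodType) (M : {additive G -> G}),
     bijective M -> (forall x, M (M x) = x) ->
     let Gp := Gplus M in let Gm := Gminus M in
     let U := Gp :&: Gm in let W := sumset Gp Gm in
     (* (1) *)
     (U = tors2 Gp /\ U = tors2 Gm /\ sum_kernel Gp Gm = anti_diag U) /\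
     (* (2) *)
     ((forall x, x *+ 2 \in W) /\ (forall x, M x - x \in W)) /\
     (* (3) *)
     (exists F : {additive G -> G},
        (forall x, M x = x + F x) /\ (forall x, F x \in Gm) /\
        (forall x, x \in Gp -> F x = 0) /\
        (forall x, x \in Gm -> F x = - (x *+ 2))) /\
     (* (4) *)
     (forall M' : {additive G -> G},
        ((forall x, M' (M' x) = x) /\
         (forall x, x \in Gp -> M' x = x) /\
         (forall x, x \in Gm -> M' x = - x) /\
         (forall x, M' x - x \in Gm))
        <->
        (exists phi : {additive G -> G},
           homVU W U phi /\ (forall x, M' x = M x + phi x)))) /\
  (* (5) *)
  (forall (G : finZmodType) (W Gm Gp : {set G}),
     is_subgroup W -> is_subgroup Gm -> is_subgroup Gp ->
     W = sumset Gm Gp ->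
     tors2 Gp = tors2 Gm ->
     let U := tors2 Gp in
     sum_kernel Gm Gp = anti_diag U ->
     (forall x, x *+ 2 \in W) ->
     let ext (F : G -> G) :=
       (forall x, F x \in Gm) /\ (forall x, x \in Gp -> F x = 0) /\
       (forall x, x \in Gm -> F x = - (x *+ 2)) in
     (exists F : {additive G -> G}, ext F) /\
     (forall F : {additive G -> G}, ext F ->
        forall M : {additive G -> G},
          (bijective M /\ (forall x, M (M x) = x) /\
           Gplus M = Gp /\ Gminus M = Gm)
          <->
          (exists phi : {additive G -> G},
             homVU W U phi /\
             (forall x, M x = x + (F x + phi x)) /\
             Gp = [set x | F x + phi x == 0] /\
             Gm = [set x | F x + phi x + x *+ 2 == 0]))).
Proof.
split=> [G M _ MK Gp Gm U W | G W Gm Gp _ sgm sgp -> tors2E U sum_kernelE double_W ext].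
  have sgp : is_subgroup Gp := subgroup_Gplus M.
  have sgm : is_subgroup Gm := subgroup_Gminus M.
  have pmM := involution_pm_eigen MK.
  have tors2Gm : tors2 Gm \subset Gp by rewrite -Gplus_Gminus_tors2m subsetIl.
  split; [|split; [|split]].
  - split; [exact: Gplus_Gminus_tors2p | split; [exact: Gplus_Gminus_tors2m |]].
    exact: sum_kernel_anti_diag.
  - split=> x; first exact: involution_double_sumset.
    exact: mem_sumsetr (involution_subr_Gminus MK x).
  - exact: pm_involution_decomp pmM.
  - by move=> M'; apply: pm_involutionP sgp sgm (involution_double_sumset MK) tors2Gm pmM M'.
split; first exact: exists_FW_extension sgm sgp double_W sum_kernelE.
by move=> F [F_Gm [F_Gp F_Gm_double]] M; apply: prescribed_involutionP.
Qed.
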